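(* If $A\subset\mathbb{R}^n$ is monovex and $R\subset\mathbb{R}^n$ is an open box whose faces are parallel to the axes, then the Minkowski sum $A+R=\{a+r: a\in A, r\in R\}$ is monovex.
   Context: A set $A \subseteq \mathbb{R}^n$ is monovex if for every $x,y \in A$ there is a continuous path $\gamma:[0,1]\to A$ with $\gamma(0)=x$, $\gamma(1)=y$ and each coordinate $\gamma_i$ monotone (nondecreasing or nonincreasing). An open box with faces parallel to the axes is a set of the form $\times_{i=1}^n(a_i,b_i)$. *)

From mathcomp Require Import all_boot all_order all_algebra.
From mathcomp Require Import all_classical all_reals all_analysis.
Set Implicit Arguments. Unset Strict Implicit. Unset Printing Implicit Defensive.
Import Order.TTheory GRing.Theory Num.Theory.
Local Open Scope classical_set_scope.
Local Open Scope ring_scope.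
Import numFieldNormedType.Exports.

Definition monotone_on01 {R : realType} (f : R -> R) : Prop :=
  {in `[0, 1] &, {homo f : s t / s <= t}} \/
  {in `[0, 1] &, {homo f : s t / s <= t >-> t <= s}}.

Definition monovex {R : realType} (n : nat) (A : set 'rV[R]_n) : Prop :=
  forall x y, A x -> A y ->
    exists gamma : R -> 'rV[R]_n,
      {within `[0, 1]%classic, continuous (gamma : R -> _)} /\
      (forall t, t \in `[0, 1] -> A (gamma t)) /\
      gamma 0 = x /\ gamma 1 = y /\
      (forall i : 'I_n, monotone_on01 (fun t => gamma t ord0 i)).

Definition open_box {R : realType} (n : nat) (a b : 'rV[R]_n) : set 'rV[R]_n :=
  [set x | forall i : 'I_n, a ord0 i < x ord0 i < b ord0 i].

Definition minkowski_sum {R : realType} (n : nat) (A B : set 'rV[R]_n) : set 'rV[R]_n :=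
  [set z | exists a b, A a /\ B b /\ z = a + b].

(** Take a monotone path [gamma] in [A] from [a1] to [a2] and points
    [x = a1 + r1], [y = a2 + r2] with [r1, r2] in the box.  In each coordinate,
    clamp the straight segment from [x] to [y] into the moving window
    [gamma t + [min r1 r2, max r1 r2]], which stays inside [gamma t + box].
    Clamping is monotone in the window and in the clamped value, so the
    coordinate is monotone when [gamma] and the segment move the same way;
    when they move in opposite directions, the segment never leaves the window
    and the clamp does nothing. *)
From mathcomp Require Import all_boot all_order all_algebra.
From mathcomp Require Import all_classical all_reals all_analysis.
From mathcomp Require Import ring lra.
Import Order.TTheory GRing.Theory Num.Theory.
Import numFieldNormedType.Exports.
Local Open Scope classical_set_scope.
Local Open Scope ring_scope.

Section Clamp.
Context {R : realType}.

Definition clamp (lo hi v : R) : R := Num.min hi (Num.max lo v).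

Lemma le_clamp (lo1 hi1 v1 lo2 hi2 v2 : R) :
  lo1 <= lo2 -> hi1 <= hi2 -> v1 <= v2 -> clamp lo1 hi1 v1 <= clamp lo2 hi2 v2.
Proof. by move=> lo12 hi12 v12; rewrite le_min2 ?le_max2. Qed.

Lemma clamp_id (lo hi v : R) : lo <= v <= hi -> clamp lo hi v = v.
Proof. by case/andP=> lov vhi; rewrite /clamp (max_idPr lov) (min_idPr vhi). Qed.

Lemma clamp_itv (lo hi v : R) : lo <= hi -> lo <= clamp lo hi v <= hi.
Proof. by move=> lohi; rewrite le_min ge_min le_max !lexx lohi. Qed.

Lemma continuous_clamp (T : topologicalType) (lo hi v : T -> R) (s : T) :
  {for s, continuous lo} -> {for s, continuous hi} -> {for s, continuous v} ->
  {for s, continuous (fun t => clamp (lo t) (hi t) (v t))}.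
Proof.
by move=> clo chi cv; apply: (continuous_min chi); apply: continuous_max.
Qed.

Lemma homo_in01_rev (f : R -> R) (rR : rel R) :
  {in `[0, 1] &, {homo f : s t / s <= t >-> rR t s}} ->
  {in `[0, 1] &, {homo (fun t => f (1 - t)) : s t / s <= t >-> rR s t}}.
Proof.
have rev01 (t : R) : t \in `[0, 1] -> 1 - t \in `[0, 1].
  by rewrite !in_itv /= => /andP[t0 t1]; apply/andP; split; lra.
by move=> fh s t s01 t01 st; apply: fh; rewrite ?rev01 ?lerD2l ?lerN2.
Qed.

Lemma monotone_on01_rev (f : R -> R) :
  monotone_on01 f -> monotone_on01 (fun t => f (1 - t)).
Proof.
case=> [fu|fd]; [right|left]; last exact: homo_in01_rev.
exact: (@homo_in01_rev f (fun a b => b <= a) fu).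
Qed.

Lemma monotone_on01_clamp_segment (g : R -> R) (l h x y : R) :
  monotone_on01 g -> l <= x - g 0 <= h -> l <= y - g 1 <= h ->
  monotone_on01 (fun t => clamp (g t + l) (g t + h) (x + t * (y - x))).
Proof.
move=> gm; wlog gu : g x y gm / {in `[0, 1] &, {homo g : s t / s <= t}}.
  (* Time reversal swaps [x] and [y] and flips the direction of [g]. *)
  move=> nondecr_case xg0 yg1; case: (gm) => [gu|gd]; first exact: nondecr_case.
  pose G t := clamp (g (1 - t) + l) (g (1 - t) + h) (y + t * (x - y)).
  have -> : (fun t => clamp (g t + l) (g t + h) (x + t * (y - x)))
          = (fun t => G (1 - t)).
    by apply: funext => t; rewrite /G subKr; congr clamp; ring.
  apply: monotone_on01_rev; apply: nondecr_case; rewrite ?subr0 ?subrr //.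
  - exact: monotone_on01_rev.
  - exact: homo_in01_rev.
move=> /andP[lx xh] /andP[ly yh].
have in01 (t : R) : t \in `[0, 1] -> 0 <= t <= 1 by rewrite in_itv.
have [z01 o01] : (0 : R) \in `[0, 1] /\ (1 : R) \in `[0, 1].
  by split; rewrite in_itv /= ler01 lexx.
have g01 t : t \in `[0, 1] -> g 0 <= g t <= g 1.
  by move=> t01; have /andP[t0 t1] := in01 t t01; rewrite !gu.
case: (leP x y) => [xy|yx].
- left => s t s01 t01 st; apply: le_clamp; rewrite ?lerD2r ?gu //.
  by rewrite lerD2l ler_wpM2r // subr_ge0.
- right => s t s01 t01 st.
  have in_window u : u \in `[0, 1] ->
      g u + l <= x + u * (y - x) <= g u + h.
    move=> u01; have /andP[u0 u1] := in01 u u01.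
    by have /andP[gu0 gu1] := g01 u u01; apply/andP; split; nra.
  by rewrite !clamp_id ?in_window // lerD2l ler_wnM2r // subr_le0 ltW.
Qed.

Definition mx_clamp {m n : nat} (lo hi v : 'M[R]_(m, n)) : 'M[R]_(m, n) :=
  \matrix_(i, j) clamp (lo i j) (hi i j) (v i j).

Lemma continuous_mxP (T : topologicalType) m n (f : T -> 'M[R]_(m, n)) (s : T) :
  {for s, continuous f} <-> forall i j, {for s, continuous (fun t => f t i j)}.
Proof.
split=> [fc i j|fc].
  exact: (continuous_comp fc (@coord_continuous R m n i j (f s))).
apply/cvg_mx_entourageP => A entA.
apply: filter_forall => i; apply: filter_forall => j.
apply: filterS ((cvg_app_entourageP _ _ _).1 (fc i j) A entA) => t At.
exact: mem_set.
Qed.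

Lemma continuous_mx_clamp (T : topologicalType) m n
    (lo hi v : T -> 'M[R]_(m, n)) (s : T) :
  {for s, continuous lo} -> {for s, continuous hi} -> {for s, continuous v} ->
  {for s, continuous (fun t => mx_clamp (lo t) (hi t) (v t))}.
Proof.
move=> /continuous_mxP clo /continuous_mxP chi /continuous_mxP cv.
apply/continuous_mxP => i j.
have -> : (fun t => mx_clamp (lo t) (hi t) (v t) i j)
        = (fun t => clamp (lo t i j) (hi t i j) (v t i j)).
  by apply: funext => t; rewrite mxE.
exact: continuous_clamp.
Qed.

End Clamp.

Section ClampPath.
Context {R : realType} {n : nat}.
Variables (gamma : R -> 'rV[R]_n) (lo hi x y : 'rV[R]_n).
Hypothesis x_window : forall j, lo ord0 j <= (x - gamma 0) ord0 j <= hi ord0 j.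
Hypothesis y_window : forall j, lo ord0 j <= (y - gamma 1) ord0 j <= hi ord0 j.

Definition clamp_path (t : R) : 'rV[R]_n :=
  mx_clamp (gamma t + lo) (gamma t + hi) (x + t *: (y - x)).

Lemma clamp_pathE t j :
  clamp_path t ord0 j =
  clamp (gamma t ord0 j + lo ord0 j) (gamma t ord0 j + hi ord0 j)
        (x ord0 j + t * (y ord0 j - x ord0 j)).
Proof. by rewrite !mxE. Qed.

Lemma clamp_path0 : clamp_path 0 = x.
Proof.
apply/rowP => j; rewrite clamp_pathE mul0r addr0 clamp_id //.
by have := x_window j; rewrite !mxE => /andP[? ?]; apply/andP; split; lra.
Qed.

Lemma clamp_path1 : clamp_path 1 = y.
Proof.
apply/rowP => j; rewrite clamp_pathE mul1r subrKC clamp_id //.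
by have := y_window j; rewrite !mxE => /andP[? ?]; apply/andP; split; lra.
Qed.

Lemma clamp_path_window t j :
  lo ord0 j <= (clamp_path t - gamma t) ord0 j <= hi ord0 j.
Proof.
have /andP[lx xh] := x_window j.
rewrite !mxE; set c := clamp _ _ _.
have /andP[lo_c c_hi] :
    gamma t ord0 j + lo ord0 j <= c <= gamma t ord0 j + hi ord0 j.
  by apply: clamp_itv; rewrite lerD2l (le_trans lx xh).
by apply/andP; split; lra.
Qed.

Lemma clamp_path_continuous :
  {within `[0, 1], continuous gamma} -> {within `[0, 1], continuous clamp_path}.
Proof.
move=> gc s.
apply: (@continuous_mx_clamp R (@subspace R `[0, 1]) 1 n
  (fun t => gamma t + lo) (fun t => gamma t + hi) (fun t => x + t *: (y - x))).
- by apply: cvgD; [exact: gc | exact: cvg_cst].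
- by apply: cvgD; [exact: gc | exact: cvg_cst].
apply: cvgD; first exact: cvg_cst.
apply: cvgZ; last exact: cvg_cst.
have id_cont : {within `[0, 1], continuous (@id R)}.
  by apply: continuous_subspaceT => t; exact: cvg_id.
exact: id_cont.
Qed.

Lemma clamp_path_monotone :
  (forall i, monotone_on01 (fun t => gamma t ord0 i)) ->
  forall i, monotone_on01 (fun t => clamp_path t ord0 i).
Proof.
move=> gm i.
rewrite (funext (clamp_pathE ^~ i)).
apply: monotone_on01_clamp_segment; first exact: gm.
  by have := x_window i; rewrite !mxE.
by have := y_window i; rewrite !mxE.
Qed.

End ClampPath.

Theorem lemma2 (R : realType) (n : nat) (A : set 'rV[R]_n) (a b : 'rV[R]_n) :
  monovex A -> monovex (minkowski_sum A (open_box a b)).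
Proof.
move=> mA _ _ [a1 [r1 [Aa1 [r1B ->]]]] [a2 [r2 [Aa2 [r2B ->]]]].
have [gamma [gc [gA [g0 [g1 gm]]]]] := mA _ _ Aa1 Aa2.
pose lo := \row_j Num.min (r1 ord0 j) (r2 ord0 j).
pose hi := \row_j Num.max (r1 ord0 j) (r2 ord0 j).
have x_window j : lo ord0 j <= (a1 + r1 - gamma 0) ord0 j <= hi ord0 j.
  by rewrite g0 addrC addKr !mxE ge_min le_max lexx.
have y_window j : lo ord0 j <= (a2 + r2 - gamma 1) ord0 j <= hi ord0 j.
  by rewrite g1 addrC addKr !mxE ge_min le_max lexx !orbT.
have box_window j : a ord0 j < lo ord0 j /\ hi ord0 j < b ord0 j.
  have /andP[? ?] := r1B j; have /andP[? ?] := r2B j.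
  by rewrite !mxE lt_min gt_max; split; apply/andP.
pose path := clamp_path gamma lo hi (a1 + r1) (a2 + r2).
exists path; split; first exact: clamp_path_continuous.
split; last first.
  split; first exact: clamp_path0.
  by split; [exact: clamp_path1 | exact: clamp_path_monotone].
move=> t t01; exists (gamma t), (path t - gamma t).
split; first exact: gA.
split; last by rewrite subrKC.
move=> j; have [a_lo hi_b] := box_window j.
have /andP[lo_c c_hi] : lo ord0 j <= (path t - gamma t) ord0 j <= hi ord0 j.
  exact: clamp_path_window x_window t j.
by rewrite (lt_le_trans a_lo lo_c) (le_lt_trans c_hi hi_b).
Qed.
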